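(* Let $\mathcal V$ be a topological vector space over $\mathbb C$, $X$ a non-empty set, and $\mathbb C^X$ the vector space of all complex-valued functions on $X$. Let $T:\mathcal V\to\mathbb C^X$ be a map which is sublinear in the sense that for all $f,g\in\mathcal V$ and $\lambda\in\mathbb C$, $$|T(f+g)|\le |T(f)|+|T(g)|\quad\text{and}\quad |T(\lambda f)|=|\lambda|\,|T(f)|$$ (pointwise on $X$), and suppose that for every $x\in X$ the functional $T_x:\mathcal V\to\mathbb C$, $T_x(f):=T(f)(x)$, is continuous. Let $S=\{f\in\mathcal V: T(f)\text{ is unbounded on }X\}$. Then either $S=\emptyset$ or $S$ is dense and $G_\delta$ in $\mathcal V$.
   Context: No completeness of $\mathcal V$ is assumed. *)

From Stdlib Require Import Reals.
Open Scope R_scope.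

Definition Cx : Type := (R * R)%type.
Definition Cre (z : Cx) : R := fst z.
Definition Cim (z : Cx) : R := snd z.
Definition C0 : Cx := (0, 0).
Definition C1 : Cx := (1, 0).
Definition Cadd (z w : Cx) : Cx := (fst z + fst w, snd z + snd w).
Definition Copp (z : Cx) : Cx := (- fst z, - snd z).
Definition Cmul (z w : Cx) : Cx :=
  (fst z * fst w - snd z * snd w, fst z * snd w + snd z * fst w).
Definition Cmod (z : Cx) : R := sqrt (fst z ^ 2 + snd z ^ 2).

Definition C_open (U : Cx -> Prop) : Prop :=
  forall z, U z -> exists eps, 0 < eps /\
    forall w, Cmod (Cadd w (Copp z)) < eps -> U w.

Record TVS : Type := {
  vcar :> Type;
  vadd : vcar -> vcar -> vcar;
  vzero : vcar;
  vopp : vcar -> vcar;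
  vscal : Cx -> vcar -> vcar;
  vadd_assoc : forall u v w, vadd u (vadd v w) = vadd (vadd u v) w;
  vadd_comm : forall u v, vadd u v = vadd v u;
  vadd_zero : forall u, vadd u vzero = u;
  vadd_opp : forall u, vadd u (vopp u) = vzero;
  vscal_one : forall u, vscal C1 u = u;
  vscal_assoc : forall a b u, vscal a (vscal b u) = vscal (Cmul a b) u;
  vscal_distr_v : forall a u v, vscal a (vadd u v) = vadd (vscal a u) (vscal a v);
  vscal_distr_c : forall a b u, vscal (Cadd a b) u = vadd (vscal a u) (vscal b u);
  vopen : (vcar -> Prop) -> Prop;
  vopen_full : vopen (fun _ => True);
  vopen_inter : forall U W, vopen U -> vopen W -> vopen (fun v => U v /\ W v);
  vopen_union : forall (I : Type) (F : I -> vcar -> Prop),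
      (forall i, vopen (F i)) -> vopen (fun v => exists i, F i v);
  vadd_cont : forall (W : vcar -> Prop) u v, vopen W -> W (vadd u v) ->
      exists U1 U2, vopen U1 /\ vopen U2 /\ U1 u /\ U2 v /\
        forall u' v', U1 u' -> U2 v' -> W (vadd u' v');
  vscal_cont : forall (W : vcar -> Prop) a v, vopen W -> W (vscal a v) ->
      exists eps U, 0 < eps /\ vopen U /\ U v /\
        forall b v', Cmod (Cadd b (Copp a)) < eps -> U v' -> W (vscal b v')
}.

Arguments vadd {t}. Arguments vscal {t}. Arguments vopen {t}.

Definition dense {V : TVS} (S : V -> Prop) : Prop :=
  forall U : V -> Prop, vopen U -> (exists u, U u) -> exists u, U u /\ S u.

Definition G_delta {V : TVS} (S : V -> Prop) : Prop :=
  exists O : nat -> V -> Prop, (forall n, vopen (O n)) /\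
    forall v, S v <-> (forall n, O n v).

Definition continuous_VC {V : TVS} (phi : V -> Cx) : Prop :=
  forall U : Cx -> Prop, C_open U -> vopen (fun v => U (phi v)).

Definition unbounded {X : Type} (h : X -> Cx) : Prop :=
  ~ (exists M : R, forall x, Cmod (h x) <= M).

(* If [T g] is unbounded and [T f] is bounded, then sublinearity forces
   [T (f + b g)] to be unbounded for every [b <> 0]; since [b g] is as close
   to [0] as we like, every neighbourhood of [f] meets [S], so [S] is dense.
   On the other hand [S] is the intersection over [n] of the sets
   [{f | exists x, n < |T f x|}], each a union of preimages of open sets
   under the continuous functionals [T_x]. *)
From Pilot Require Import Defs.
From Stdlib Require Import Reals Lra Classical.
From Coquelicot Require Complex.
Open Scope R_scope.

Lemma Cmod_Cadd_le (a b : Cx) : Cmod (Cadd a b) <= Cmod a + Cmod b.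
Proof. exact (Complex.Cmod_triangle a b). Qed.

Lemma Cmod_Copp (a : Cx) : Cmod (Copp a) = Cmod a.
Proof. exact (Complex.Cmod_opp a). Qed.

Lemma C_open_Cmod_gt (r : R) : C_open (fun z => r < Cmod z).
Proof.
  intros z Hz; exists (Cmod z - r); split; [lra |].
  intros w Hw.
  assert (Ez : z = Cadd w (Copp (Cadd w (Copp z)))).
  { destruct z, w; unfold Cadd, Copp; simpl; f_equal; ring. }
  pose proof (Cmod_Cadd_le w (Copp (Cadd w (Copp z)))) as Htri.
  rewrite <- Ez, Cmod_Copp in Htri; lra.
Qed.

Lemma Cmod_real (r : R) : 0 <= r -> Cmod (r, 0) = r.
Proof.
  intros Hr; change (sqrt (r ^ 2 + 0 ^ 2) = r).
  replace (r ^ 2 + 0 ^ 2) with (r * r) by ring.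
  apply sqrt_square; lra.
Qed.

Lemma Cmod_m1 : Cmod (-1, 0) = 1.
Proof.
  change (sqrt ((-1) ^ 2 + 0 ^ 2) = 1).
  replace ((-1) ^ 2 + 0 ^ 2) with 1 by ring; exact sqrt_1.
Qed.

Section TVSFacts.

Variable V : TVS.

Lemma vscal0l (u : V) : vscal C0 u = vzero V.
Proof.
  set (z := vscal C0 u).
  assert (Hzz : z = vadd z z).
  { unfold z; rewrite <- vscal_distr_c; f_equal.
    unfold C0, Cadd; simpl; f_equal; ring. }
  assert (H : vadd (vadd z z) (vopp V z) = z).
  { rewrite <- vadd_assoc, vadd_opp, vadd_zero; reflexivity. }
  rewrite <- Hzz, vadd_opp in H; symmetry; exact H.
Qed.

Lemma vaddKl (f g : V) : vadd (vadd f g) (vscal (-1, 0) f) = g.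
Proof.
  rewrite (vadd_comm V f g), <- vadd_assoc.
  rewrite <- (vscal_one V f) at 1; rewrite <- vscal_distr_c.
  replace (Cadd Defs.C1 (-1, 0)) with C0
    by (unfold Cadd, Defs.C1, C0; simpl; f_equal; ring).
  rewrite vscal0l, vadd_zero; reflexivity.
Qed.

(* Continuity of [(b, g) |-> b g] at [(0, g)] followed by continuity of
   addition at [(f, 0)]. *)
Lemma open_small_translate (U : V -> Prop) (f g : V) :
  vopen U -> U f -> exists r, 0 < r /\ U (vadd f (vscal (r, 0) g)).
Proof.
  intros HU Uf.
  destruct (vadd_cont V U f (vzero V) HU) as (U1 & U2 & _ & HU2 & U1f & U20 & Hsum);
    [rewrite vadd_zero; exact Uf |].
  destruct (vscal_cont V U2 C0 g HU2) as (eps & U' & Heps & _ & U'g & Hsc);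
    [rewrite vscal0l; exact U20 |].
  exists (eps / 2); split; [lra |].
  apply Hsum; [exact U1f |]; apply Hsc; [| exact U'g].
  replace (Cadd (eps / 2, 0) (Copp C0)) with ((eps / 2, 0) : Cx)
    by (unfold Cadd, Copp, C0; simpl; f_equal; ring).
  rewrite Cmod_real; lra.
Qed.

End TVSFacts.

Section Sublinear.

Variables (V : TVS) (X : Type) (T : V -> X -> Cx).
Hypothesis Hadd : forall (f g : V) (x : X),
  Cmod (T (vadd f g) x) <= Cmod (T f x) + Cmod (T g x).
Hypothesis Hscal : forall (f : V) (l : Cx) (x : X),
  Cmod (T (vscal l f) x) = Cmod l * Cmod (T f x).

Lemma unbounded_add_bounded (f g : V) (r : R) :
  0 < r -> ~ unbounded (T f) -> unbounded (T g) ->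
  unbounded (T (vadd f (vscal (r, 0) g))).
Proof.
  intros Hr Hf Hg [N HN].
  apply NNPP in Hf; destruct Hf as [M HM].
  apply Hg; exists ((N + M) / r); intros x.
  pose proof (Hadd (vadd f (vscal (r, 0) g)) (vscal (-1, 0) f) x) as Htri.
  rewrite vaddKl, !Hscal, Cmod_real, Cmod_m1 in Htri by lra.
  pose proof (HN x); pose proof (HM x).
  apply (Rmult_le_reg_l r); [lra |].
  field_simplify; lra.
Qed.

Lemma unbounded_dense (g : V) :
  unbounded (T g) -> dense (fun f => unbounded (T f)).
Proof.
  intros Hg U HU [f Uf].
  destruct (classic (unbounded (T f))) as [Hf | Hf]; [exists f; auto |].
  destruct (open_small_translate V U f g HU Uf) as (r & Hr & Ur).
  exists (vadd f (vscal (r, 0) g)); split; [exact Ur |].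
  exact (unbounded_add_bounded f g r Hr Hf Hg).
Qed.

End Sublinear.

Lemma unbounded_G_delta (V : TVS) (X : Type) (T : V -> X -> Cx) :
  (forall x, continuous_VC (fun f : V => T f x)) ->
  G_delta (fun f => unbounded (T f)).
Proof.
  intros Hcont.
  exists (fun n f => exists x, INR n < Cmod (T f x)); split.
  - intros n; apply (vopen_union V X (fun x f => INR n < Cmod (T f x))).
    intros x; exact (Hcont x _ (C_open_Cmod_gt (INR n))).
  - intros f; split.
    + intros Hf n; apply NNPP; intros Hn; apply Hf; exists (INR n).
      intros x; apply Rnot_lt_le; intros Hx; apply Hn; exists x; exact Hx.
    + intros Hall [M HM].
      destruct (INR_unbounded M) as [n Hn].
      destruct (Hall n) as [x Hx]; pose proof (HM x); lra.
Qed.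

Theorem mainTheorem1 (V : TVS) (X : Type) (hX : inhabited X) (T : V -> X -> Cx)
  (Hadd : forall (f g : V) (x : X),
      Cmod (T (vadd f g) x) <= Cmod (T f x) + Cmod (T g x))
  (Hscal : forall (f : V) (l : Cx) (x : X),
      Cmod (T (vscal l f) x) = Cmod l * Cmod (T f x))
  (Hcont : forall x : X, continuous_VC (fun f : V => T f x)) :
  let S := fun f : V => unbounded (T f) in
  (forall f, ~ S f) \/ (dense S /\ G_delta S).
Proof.
  intros S.
  destruct (classic (exists g, S g)) as [[g Sg] | HS].
  - right; split.
    + exact (unbounded_dense V X T Hadd Hscal g Sg).
    + exact (unbounded_G_delta V X T Hcont).
  - left; intros f Sf; apply HS; exists f; exact Sf.
Qed.
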